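(* Let $P = \{p_1,\dots,p_s\}$ and $P' = \{p'_1,\dots,p'_s\}$ be width-$k$ puzzles of size $s$, each with a fixed enumeration of its rows. If there is a graph isomorphism $\varphi : G_P \to G_{P'}$ that maps row vertices to row vertices, column vertices to column vertices, element vertices to element vertices, and cell vertices to cell vertices, then there exist $\rho \in \mathrm{Sym}([k])$ and $\delta \in \mathrm{Sym}(\{1,2,3\})$ such that $P' = \{(\delta(r_{\rho(c)}))_{c \in [k]} : r \in P\}$. Consequently $P$ is a strong USP if and only if $P'$ is a strong USP.
   Context: A width-$k$ puzzle is a finite set $P \subseteq \{1,2,3\}^k$; for $r\in P$, $r_c$ is its $c$-th coordinate. For a puzzle $P=\{p_1,\dots,p_s\}$ with rows enumerated, $G_P$ is the undirected graph with vertex set the disjoint union of row vertices $\{\mathrm{row}_i\}_{i\in[s]}$, column vertices $\{\mathrm{col}_c\}_{c\in[k]}$, element vertices $\{e_j\}_{j\in\{1,2,3\}}$, and cell vertices $\{v_{i,c}\}_{(i,c)\in[s]\times[k]}$, where each cell vertex $v_{i,c}$ is adjacent exactly to $\mathrm{row}_i$, $\mathrm{col}_c$, and $e_{(p_i)_c}$, and there are no other edges. $P$ is a strong USP if for all $\pi_1,\pi_2,\pi_3 \in \mathrm{Sym}(P)$, either $\pi_1=\pi_2=\pi_3$, or there exist $r \in P$ and $c \in [k]$ such that exactly two of $(\pi_1(r))_c = 1$, $(\pi_2(r))_c = 2$, $(\pi_3(r))_c = 3$ hold. *)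

From mathcomp Require Import all_boot fingroup perm.
Set Implicit Arguments. Unset Strict Implicit. Unset Printing Implicit Defensive.

(* Entries {1,2,3} are encoded as 'I_3 = {0,1,2}: value j+1 is encoded by j. *)
Definition row_t (k : nat) := {ffun 'I_k -> 'I_3}.
Definition puzzle (k : nat) := {set row_t k}.

Definition e1 : 'I_3 := @Ordinal 3 0 isT.
Definition e2 : 'I_3 := @Ordinal 3 1 isT.
Definition e3 : 'I_3 := @Ordinal 3 2 isT.

(* Sym(P): bijections of P, represented as permutations of the row type
   supported on P (each bijection P -> P extends uniquely). *)
Definition strong_USP (k : nat) (P : puzzle k) : Prop :=
  forall pi1 pi2 pi3 : {perm row_t k},
    perm_on P pi1 -> perm_on P pi2 -> perm_on P pi3 ->
    (pi1 = pi2 /\ pi2 = pi3) \/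
    exists r, exists c : 'I_k, r \in P /\
      ((pi1 r c == e1) + (pi2 r c == e2) + (pi3 r c == e3) = 2)%N.

Definition vertex (s k : nat) : finType :=
  (('I_s + 'I_k) + ('I_3 + ('I_s * 'I_k)))%type.

Definition vrow s k (i : 'I_s) : vertex s k := inl (inl i).
Definition vcol s k (c : 'I_k) : vertex s k := inl (inr c).
Definition velt s k (e : 'I_3) : vertex s k := inr (inl e).
Definition vcell s k (i : 'I_s) (c : 'I_k) : vertex s k := inr (inr (i, c)).

Definition vkind s k (v : vertex s k) : nat :=
  match v with
  | inl (inl _) => 0 | inl (inr _) => 1
  | inr (inl _) => 2 | inr (inr _) => 3
  end.

Definition cell_edge s k (p : 'I_s -> row_t k) (u v : vertex s k) : bool :=
  match u with
  | inr (inr (i, c)) =>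
      (v == vrow k i) || (v == vcol s c) || (v == velt s k (p i c))
  | _ => false
  end.

Definition G_adj s k (p : 'I_s -> row_t k) (u v : vertex s k) : bool :=
  cell_edge p u v || cell_edge p v u.

Definition puzzle_of s k (p : 'I_s -> row_t k) : puzzle k := [set p i | i : 'I_s].

(* A type-preserving isomorphism phi of G_P onto G_P' induces bijections on
   rows, columns and elements.  The cell vertex v_(i,c) is the unique common
   neighbour of row i and column c, and it is adjacent to the element p_i(c);
   hence phi(v_(i,c)) is the cell of row phi(i), column phi(c), and the entry
   there is phi(p_i(c)).  So P' is obtained from P by permuting columns and
   renaming entries.  Such a relabelling F preserves strong USPs: a triple of
   permutations of F(P) conjugated by F becomes a triple on P, taken in the
   order dictated by the renaming of entries. *)

From mathcomp Require Import all_boot fingroup perm.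
Set Implicit Arguments. Unset Strict Implicit. Unset Printing Implicit Defensive.

Import GroupScope.

Lemma forall_ord3 (Q : 'I_3 -> Prop) : Q e1 -> Q e2 -> Q e3 -> forall j, Q j.
Proof.
move=> Q1 Q2 Q3 [[|[|[|j]]] lt_j3] //.
- by rewrite (_ : Ordinal lt_j3 = e1) //; apply: val_inj.
- by rewrite (_ : Ordinal lt_j3 = e2) //; apply: val_inj.
- by rewrite (_ : Ordinal lt_j3 = e3) //; apply: val_inj.
Qed.

Lemma sum_ord3 (F : 'I_3 -> nat) : \sum_(j < 3) F j = (F e1 + F e2 + F e3)%N.
Proof.
rewrite !big_ord_recr big_ord0 /=.
by congr (F _ + F _ + F _)%N; apply: val_inj.
Qed.

Lemma perm_onJ (T : finType) (S : {set T}) (s t : {perm T}) :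
  perm_on S s -> perm_on (t @: S) (s ^ t).
Proof.
move=> on_s; apply/subsetP => y; rewrite inE -{1 2}(permKV t y) permJ.
rewrite (inj_eq perm_inj) => moved; rewrite -(permKV t y) imset_f //.
by apply: contraR moved => /(out_perm on_s) ->.
Qed.

Section StrongUSPFamily.
Variable k : nat.
Implicit Types (P : puzzle k) (pi : 'I_3 -> {perm row_t k}).

Definition usp_count pi (r : row_t k) (c : 'I_k) : nat :=
  \sum_(j < 3) (pi j r c == j).

Definition perm3 (a b c : {perm row_t k}) (j : 'I_3) : {perm row_t k} :=
  if j == e1 then a else if j == e2 then b else c.

Lemma strong_USP_familyP P :
  strong_USP P <->
  forall pi, (forall j, perm_on P (pi j)) ->
    (forall j, pi j = pi e1) \/
    exists r c, r \in P /\ usp_count pi r c = 2.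
Proof.
split=> [usp pi on_pi | usp pi1 pi2 pi3 on1 on2 on3].
  have [[E12 E23] | [r [c [Pr count2]]]] := usp _ _ _ (on_pi e1) (on_pi e2) (on_pi e3).
    by left; apply: forall_ord3; rewrite -?E23.
  by right; exists r, c; rewrite /usp_count sum_ord3.
have on_perm3 : forall j, perm_on P (perm3 pi1 pi2 pi3 j).
  by apply: forall_ord3.
have [same | [r [c [Pr count2]]]] := usp _ on_perm3.
  by left; move: (same e2) (same e3); rewrite /perm3 /= => -> ->.
by right; exists r, c; split=> //; move: count2; rewrite /usp_count sum_ord3.
Qed.

End StrongUSPFamily.

Definition relabel k (rho : {perm 'I_k}) (delta : {perm 'I_3}) (r : row_t k) :
  row_t k := [ffun c => delta (r (rho c))].

Section Relabel.
Variables (k : nat) (rho : {perm 'I_k}) (delta : {perm 'I_3}).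

Lemma relabelK : cancel (relabel rho delta) (relabel rho^-1 delta^-1).
Proof. by move=> r; apply/ffunP => c; rewrite !ffunE permKV permK. Qed.

Lemma relabel_inj : injective (relabel rho delta).
Proof. exact: can_inj relabelK. Qed.

Lemma strong_USP_relabel (P : puzzle k) :
  strong_USP P -> strong_USP (relabel rho delta @: P).
Proof.
move/strong_USP_familyP=> usp; apply/strong_USP_familyP => pi on_pi.
pose F := perm relabel_inj.
have FP : relabel rho delta @: P = F @: P by apply: eq_imset => r; rewrite permE.
pose sigma m := pi (delta m) ^ F^-1.
have on_sigma m : perm_on P (sigma m).
  have := perm_onJ F^-1 (on_pi (delta m)).
  by rewrite FP -imset_comp (eq_imset _ (permK F)) imset_id.
have [same | [r [c [Pr count2]]]] := usp sigma on_sigma.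
  left=> j; rewrite -(permKV delta j) -(permKV delta e1).
  by apply: (@conjg_inj _ F^-1); rewrite -/(sigma _) -/(sigma _) !same.
right; exists (F r), (rho^-1 c); split; first by rewrite FP imset_f.
rewrite /usp_count (reindex_inj (@perm_inj _ delta)); apply: etrans count2.
apply: eq_bigr => m _; rewrite -{2}(permK F r) permJ.
set y := pi (delta m) (F r).
by rewrite -{1}(permKV F y) permE ffunE permKV (inj_eq perm_inj).
Qed.

End Relabel.

Lemma strong_USP_relabel_iff k (rho : {perm 'I_k}) (delta : {perm 'I_3})
    (P : puzzle k) :
  strong_USP P <-> strong_USP (relabel rho delta @: P).
Proof.
split; first exact: strong_USP_relabel.
move/(@strong_USP_relabel _ rho^-1 delta^-1).
by rewrite -imset_comp (eq_imset _ (relabelK rho delta)) imset_id.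
Qed.

Lemma puzzle_of_reindex s k (p p' : 'I_s -> row_t k) (f : row_t k -> row_t k)
    (R : {perm 'I_s}) :
  (forall i, f (p i) = p' (R i)) -> puzzle_of p' = f @: puzzle_of p.
Proof.
move=> fpE; apply/setP => r; apply/imsetP/imsetP => [[j _ ->] | [_ /imsetP[i _ ->] ->]].
  by exists (p (R^-1 j)); rewrite ?imset_f // fpE permKV.
by exists (R i); rewrite ?fpE.
Qed.

Section GraphIsomorphism.
Variables (k s : nat) (p p' : 'I_s -> row_t k) (phi : vertex s k -> vertex s k).
Hypotheses (phi_inj : injective phi)
  (phi_adj : forall u v, G_adj p' (phi u) (phi v) = G_adj p u v)
  (phi_kind : forall v, vkind (phi v) = vkind v).

Definition row_map (i : 'I_s) : 'I_s :=
  if phi (vrow k i) is inl (inl j) then j else i.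
Definition col_map (c : 'I_k) : 'I_k :=
  if phi (vcol s c) is inl (inr d) then d else c.
Definition elt_map (e : 'I_3) : 'I_3 :=
  if phi (velt s k e) is inr (inl d) then d else e.

Lemma phi_vrow i : phi (vrow k i) = vrow k (row_map i).
Proof. by rewrite /row_map; have := phi_kind (vrow k i); case: (phi _) => [[]|[]]. Qed.

Lemma phi_vcol c : phi (vcol s c) = vcol s (col_map c).
Proof. by rewrite /col_map; have := phi_kind (vcol s c); case: (phi _) => [[]|[]]. Qed.

Lemma phi_velt e : phi (velt s k e) = velt s k (elt_map e).
Proof. by rewrite /elt_map; have := phi_kind (velt s k e); case: (phi _) => [[]|[]]. Qed.

Lemma row_map_inj : injective row_map.
Proof. by move=> i j eq_ij; move: (phi_vrow i); rewrite eq_ij -phi_vrow => /phi_inj[]. Qed.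

Lemma col_map_inj : injective col_map.
Proof. by move=> c d eq_cd; move: (phi_vcol c); rewrite eq_cd -phi_vcol => /phi_inj[]. Qed.

Lemma elt_map_inj : injective elt_map.
Proof. by move=> e f eq_ef; move: (phi_velt e); rewrite eq_ef -phi_velt => /phi_inj[]. Qed.

Lemma graph_iso_entry i c : p' (row_map i) (col_map c) = elt_map (p i c).
Proof.
have : vkind (phi (vcell i c)) = 3 by rewrite phi_kind.
case phi_ic: (phi (vcell i c)) => [[]|[|[i' c']]] // _.
have := phi_adj (vcell i c) (vrow k i); have := phi_adj (vcell i c) (vcol s c).
have := phi_adj (vcell i c) (velt s k (p i c)).
rewrite phi_ic phi_vrow phi_vcol phi_velt /G_adj /cell_edge /= !eqxx /= ?orbT.
by rewrite /vrow /vcol /velt /= !orbF => /eqP[->] /eqP[->] /eqP[->].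
Qed.

End GraphIsomorphism.

Theorem mainTheorem8 (k s : nat) (p p' : 'I_s -> row_t k)
  (Hp : injective p) (Hp' : injective p')
  (phi : vertex s k -> vertex s k) (Hphi : bijective phi)
  (Hadj : forall u v, G_adj p' (phi u) (phi v) = G_adj p u v)
  (Hkind : forall v, vkind (phi v) = vkind v) :
  (exists (rho : {perm 'I_k}) (delta : {perm 'I_3}),
      puzzle_of p' = [set [ffun c => delta (r (rho c))] | r : row_t k in puzzle_of p])
  /\ (strong_USP (puzzle_of p) <-> strong_USP (puzzle_of p')).
Proof.
have phi_inj := bij_inj Hphi.
pose R := perm (row_map_inj phi_inj Hkind).
pose C := perm (col_map_inj phi_inj Hkind).
pose rho := C^-1.
pose delta := perm (elt_map_inj phi_inj Hkind).
have relabel_rows i : relabel rho delta (p i) = p' (R i).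
  apply/ffunP => c; rewrite ffunE -[in RHS](permKV C c).
  by rewrite !permE (graph_iso_entry Hadj Hkind).
have P'E := puzzle_of_reindex relabel_rows.
split; first by exists rho, delta.
by rewrite P'E; apply: strong_USP_relabel_iff.
Qed.
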